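(* Let $(\mathcal A,\phi)$ be a noncommutative probability space and let $B,C\subseteq\mathcal A$ have the cluster property. Then for all $j>0$, $k>0$, $b_1,\dots,b_j\in B$ and $c_1,\dots,c_k\in C$, $$\kappa_{j+k}[b_1,\dots,b_j,c_1,\dots,c_k]=0.$$
   Context: A noncommutative probability space is a pair $(\mathcal A,\phi)$ with $\mathcal A$ a unital algebra over $\mathbb{C}$ and $\phi$ a linear form on $\mathcal A$ with $\phi(1)=1$. Two subsets $B,C\subseteq\mathcal A$ have the cluster property if $\phi(b_1\cdots b_jc_1\cdots c_k)=\phi(b_1\cdots b_j)\,\phi(c_1\cdots c_k)$ for all $b_1,\dots,b_j\in B$ and $c_1,\dots,c_k\in C$. A reduced plane tree is a rooted plane tree in which every internal node has at least two children; its weight is its number of leaves minus 1, and $i(t)$ is its number of internal nodes. It is prime if it has at least two leaves and the rightmost child of its root is a leaf; $\mathrm{PST}_n$ is the set of prime reduced plane trees of weight $n$. For $t$ with leaves $\ell_1,\dots,\ell_{n+1}$ from left to right, an internal vertex $v$ has a clear view to the $i$th sector ($1\le i\le n$), written $v\measuredangle i$, iff $v$ is the lowest common ancestor of $\ell_i$ and $\ell_{i+1}$. For $a_1,\dots,a_n\in\mathcal A$, $$\kappa_n[a_1,\dots,a_n]=\sum_{t\in\mathrm{PST}_n}(-1)^{i(t)-1}\prod_{v\text{ internal vertex of }t}\phi\Big(\prod_{v\measuredangle i}a_i\Big),$$ where the inner product is taken in increasing order of $i$. *)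

From HB Require Import structures.
From mathcomp Require Import all_boot all_order all_algebra.
From mathcomp Require Import reals complex.
Set Implicit Arguments. Unset Strict Implicit. Unset Printing Implicit Defensive.
Import Order.TTheory GRing.Theory Num.Theory.
Local Open Scope ring_scope.

Inductive ptree : Type := PLeaf | PNode of seq ptree.

(** Vertices are addressed by the path (sequence of child indices, 0-based)
    from the root.  [leaf_addrs t] lists the leaves from left to right. *)
Fixpoint leaf_addrs (t : ptree) : seq (seq nat) :=
  match t with
  | PLeaf => [:: [::]]
  | PNode cs =>
      (fix go (i : nat) (cs : seq ptree) : seq (seq nat) :=
         match cs with
         | [::] => [::]
         | c :: cs' => [seq i :: a | a <- leaf_addrs c] ++ go i.+1 cs'
         end) 0%N cs
  end.

Fixpoint internal_addrs (t : ptree) : seq (seq nat) :=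
  match t with
  | PLeaf => [::]
  | PNode cs =>
      [::] :: (fix go (i : nat) (cs : seq ptree) : seq (seq nat) :=
         match cs with
         | [::] => [::]
         | c :: cs' => [seq i :: a | a <- internal_addrs c] ++ go i.+1 cs'
         end) 0%N cs
  end.

Fixpoint reduced (t : ptree) : bool :=
  match t with
  | PLeaf => true
  | PNode cs =>
      (2 <= size cs)%N &&
      (fix go (cs : seq ptree) : bool :=
         match cs with [::] => true | c :: cs' => reduced c && go cs' end) cs
  end.

Definition nleaves (t : ptree) : nat := size (leaf_addrs t).
Definition weight (t : ptree) : nat := (nleaves t).-1.
Definition ninternal (t : ptree) : nat := size (internal_addrs t).

Definition prime_tree (t : ptree) : bool :=
  (2 <= nleaves t)%N &&
  match t with
  | PLeaf => false
  | PNode cs => if last PLeaf cs is PLeaf then true else false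
  end.

(** Lowest common ancestor of two vertices given by their addresses:
    the longest common prefix. *)
Fixpoint lcp (s1 s2 : seq nat) : seq nat :=
  match s1, s2 with
  | x :: s1', y :: s2' => if x == y then x :: lcp s1' s2' else [::]
  | _, _ => [::]
  end.

(** The i-th leaf (1-based), l_i. *)
Definition leaf_at (t : ptree) (i : nat) : seq nat := nth [::] (leaf_addrs t) i.-1.

Definition clear_view (t : ptree) (v : seq nat) (i : nat) : bool :=
  v == lcp (leaf_at t i) (leaf_at t i.+1).

(** Enumeration of reduced plane trees by number of leaves.
    [forests tab fuel s]: sequences of trees with total leaf count s, the
    trees with k leaves being taken from [nth [::] tab k]. *)
Fixpoint forests (tab : seq (seq ptree)) (fuel s : nat) : seq (seq ptree) :=
  match fuel with
  | 0 => if s == 0%N then [:: [::]] else [::]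
  | f.+1 =>
      if s == 0%N then [:: [::]] else
      flatten [seq [seq t :: r | t <- nth [::] tab k, r <- forests tab f (s - k)]
              | k <- iota 1 s]
  end.

(** [rpt_table m] : entry i (i <= m) is the list of reduced plane trees
    with exactly i leaves. *)
Fixpoint rpt_table (m : nat) : seq (seq ptree) :=
  match m with
  | 0 => [:: [::]]
  | m'.+1 =>
      let tab := rpt_table m' in
      rcons tab (if m'.+1 == 1%N then [:: PLeaf]
                 else [seq PNode cs | cs <- forests tab m'.+1 m'.+1 & (2 <= size cs)%N])
  end.

Definition rpt (m : nat) : seq ptree := nth [::] (rpt_table m) m.

Definition PST (n : nat) : seq ptree :=
  [seq t <- rpt n.+1 | reduced t && (weight t == n) && prime_tree t].

(** The cumulant kappa_n[a_1,...,a_n], with n = size a and a_i = a`_(i-1). *)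
Definition kappa (K : comNzRingType) (A : algType K) (phi : A -> K) (a : seq A) : K :=
  let n := size a in
  \sum_(t <- PST n)
     (-1) ^+ (ninternal t).-1 *
     \prod_(v <- internal_addrs t)
        phi (\prod_(i <- iota 1 n | clear_view t v i) a`_i.-1).

Definition cluster (K : comNzRingType) (A : algType K) (phi : A -> K)
  (B C : pred A) : Prop :=
  forall bs cs : seq A, all [in B] bs -> all [in C] cs ->
    phi ((\prod_(b <- bs) b) * (\prod_(c <- cs) c)) =
    phi (\prod_(b <- bs) b) * phi (\prod_(c <- cs) c).

From HB Require Import structures.
From mathcomp Require Import all_boot all_order all_algebra.
From mathcomp Require Import reals complex.
From mathcomp Require Import ring zify.
Set Implicit Arguments. Unset Strict Implicit. Unset Printing Implicit Defensive.
Import GRing.Theory.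
Local Open Scope ring_scope.

(* Let F(w) be the signed sum, over all reduced plane trees t with |w| + 1
   leaves, of (-1)^i(t) times the product of the vertex weights of t.
   Cutting a tree at its root exhibits a forest of subtrees separated by the
   sectors S the root sees, so that for w nonempty
     sum_S phi(w_S) * prod_{gaps g of S} F(w_g) = 0,
   while kappa(w) is the same sum restricted to those S that contain the last
   position of w (the rightmost child of the root is a leaf).  Under the
   cluster property this recursion forces F(uv) = F(u) F(v) for u in B* and
   v in C*, by induction on |uv|; the sum for kappa(bc) then factors as the
   full sum for b, which vanishes, times the restricted sum for c. *)

(** * Subset sums *)

Lemma iota1S n : iota 1 n = map S (iota 0 n).
Proof. by rewrite -[1%N]/(1 + 0)%N iotaDl. Qed.

Section SubsetSums.
Variables (K : comNzRingType) (A : nzRingType) (phi : A -> K) (F : seq A -> K).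

(* [msum p [::] w] sums, over the sets S of positions of w,
   phi (p * prod_{j in S} w_j) times the product of F over the |S| + 1 maximal
   segments of w avoiding S; [lsum] keeps only the S containing the last
   position.  The middle argument u is the part of the current segment
   already read. *)
Fixpoint msum (p : A) (u w : seq A) : K :=
  match w with
  | [::] => phi p * F u
  | x :: w' => msum p (rcons u x) w' + F u * msum (p * x) [::] w'
  end.

Fixpoint lsum (p : A) (u w : seq A) : K :=
  match w with
  | [::] => if u is [::] then phi p else 0
  | x :: w' => lsum p (rcons u x) w' + F u * lsum (p * x) [::] w'
  end.

Lemma msum_unroll p u w : msum p u w = phi p * F (u ++ w) +
  \sum_(j <- iota 0 (size w)) F (u ++ take j w) * msum (p * w`_j) [::] (drop j.+1 w).
Proof.
elim: w p u => [|x w IH] p u /=; first by rewrite cats0 big_nil addr0.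
rewrite IH big_cons iota1S big_map take0 cats0 drop0 /= -addrA; congr (_ + _).
  by rewrite cat_rcons.
by rewrite addrC; congr (_ + _); apply: eq_bigr => j _; rewrite cat_rcons.
Qed.

Lemma lsum_unroll p u w : lsum p u w = (if u ++ w is [::] then phi p else 0) +
  \sum_(j <- iota 0 (size w)) F (u ++ take j w) * lsum (p * w`_j) [::] (drop j.+1 w).
Proof.
elim: w p u => [|x w IH] p u /=; first by rewrite cats0 big_nil addr0.
rewrite IH big_cons iota1S big_map take0 cats0 drop0 /= -addrA.
have -> : (if rcons u x ++ w is [::] then phi p else 0) = 0 by case: u.
have -> : (if u ++ x :: w is [::] then phi p else 0) = 0 by case: u.
rewrite !add0r addrC; congr (_ + _); apply: eq_bigr => j _.
by rewrite cat_rcons.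
Qed.

Lemma lsum_rcons0 p u x : lsum p (rcons u x) [::] = 0.
Proof. by case: u. Qed.

End SubsetSums.

Section Factorisation.
Variables (K : comNzRingType) (A : algType K) (phi : A -> K) (F : seq A -> K).
Variables (inB inC : pred A).
Hypotheses (phi_cluster : cluster phi inB inC) (phi1 : phi 1 = 1).

Local Notation msum := (msum phi F).
Local Notation lsum := (lsum phi F).
Local Notation mprod s := (\prod_(x <- s) x).

Lemma msum_prodBC bs g : all inB bs -> all inC g -> forall cs u, all inC cs ->
  msum (mprod bs * mprod cs) u g = phi (mprod bs) * msum (mprod cs) u g.
Proof.
move=> hb; elim: g => [|x g IH] /= hg cs u hc; first by rewrite phi_cluster // mulrA.
case/andP: hg => hx hg.
have -> : mprod bs * mprod cs * x = mprod bs * mprod (rcons cs x) by rewrite big_rcons mulrA.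
rewrite !IH ?all_rcons ?hx ?hc // big_rcons /=; ring.
Qed.

Lemma lsum_prodBC bs g : all inB bs -> all inC g -> forall cs u, all inC cs ->
  lsum (mprod bs * mprod cs) u g = phi (mprod bs) * lsum (mprod cs) u g.
Proof.
move=> hb; elim: g => [|x g IH] /= hg cs u hc.
  by case: u => [|? ?]; rewrite ?phi_cluster ?mulr0.
case/andP: hg => hx hg.
have -> : mprod bs * mprod cs * x = mprod bs * mprod (rcons cs x) by rewrite big_rcons mulrA.
rewrite !IH ?all_rcons ?hx ?hc // big_rcons /=; ring.
Qed.

Lemma prod_mul_seq1 bs (x : A) : mprod bs * x = mprod bs * mprod [:: x].
Proof. by rewrite big_seq1. Qed.

Section BelowN.
Variable N : nat.
Hypothesis F_mul_below : forall u v, all inB u -> all inC v -> (size (u ++ v) < N)%N ->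
  F (u ++ v) = F u * F v.

Lemma msum_splitC bs u g : all inB bs -> all inB u -> all inC g ->
  forall v, all inC v -> (size (u ++ v ++ g) <= N)%N ->
  msum (mprod bs) (u ++ v) g =
  phi (mprod bs) * F u * msum 1 v g + phi (mprod bs) * (F (u ++ v ++ g) - F u * F (v ++ g)).
Proof.
move=> hb hu; elim: g => [|x g IH] /= hg v hv hs; first by rewrite !cats0 phi1; ring.
case/andP: hg => hx hg.
rewrite rcons_cat IH ?all_rcons ?hx //; last by rewrite cat_rcons.
rewrite (F_mul_below hu hv); last by move: hs; rewrite !size_cat /=; lia.
rewrite prod_mul_seq1 msum_prodBC //= ?hx // big_seq1 mul1r !cat_rcons; ring.
Qed.

Lemma msum_split g : all inC g -> forall be bs u, all inB bs -> all inB u -> all inB be ->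
  (size (u ++ be ++ g) <= N)%N ->
  msum (mprod bs) u (be ++ g) =
  msum (mprod bs) u be * msum 1 [::] g + phi (mprod bs) * (F (u ++ be ++ g) - F (u ++ be) * F g).
Proof.
move=> hg; elim=> [|x be IH] bs u hb hu hbe hs /=.
  by have := @msum_splitC bs u g hb hu hg [::] isT; rewrite /= !cats0 => ->.
case/andP: hbe => hx hbe.
have ex : mprod bs * x = mprod (rcons bs x) by rewrite big_rcons.
rewrite ex !IH ?all_rcons ?hx //; first last.
- by move: hs; rewrite !size_cat /=; lia.
- by move: hs; rewrite !size_cat size_rcons /=; lia.
rewrite /= (F_mul_below hbe hg); last by move: hs; rewrite !size_cat /=; lia.
rewrite !cat_rcons; ring.
Qed.

Lemma lsum_splitC bs u g : all inB bs -> all inB u -> all inC g -> g != [::] ->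
  forall v, all inC v -> (size (u ++ v ++ g) <= N)%N ->
  lsum (mprod bs) (u ++ v) g = phi (mprod bs) * F u * lsum 1 v g.
Proof.
move=> hb hu; elim: g => [|x g IH] //= hg _ v hv hs.
case/andP: hg => hx hg.
have -> : lsum (mprod bs) (rcons (u ++ v) x) g = phi (mprod bs) * F u * lsum 1 (rcons v x) g.
  case: g IH hg hs => [|y g] IH hg hs; first by rewrite !lsum_rcons0 mulr0.
  by rewrite rcons_cat IH ?all_rcons ?hx // cat_rcons.
rewrite (F_mul_below hu hv); last by move: hs; rewrite !size_cat /=; lia.
rewrite prod_mul_seq1 lsum_prodBC //= ?hx // big_seq1 mul1r; ring.
Qed.

Lemma lsum_split g : all inC g -> g != [::] ->
  forall be bs u, all inB bs -> all inB u -> all inB be -> (size (u ++ be ++ g) <= N)%N ->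
  lsum (mprod bs) u (be ++ g) = msum (mprod bs) u be * lsum 1 [::] g.
Proof.
move=> hg hg0; elim=> [|x be IH] bs u hb hu hbe hs /=.
  by have := @lsum_splitC bs u g hb hu hg hg0 [::] isT; rewrite /= !cats0 => ->.
case/andP: hbe => hx hbe.
have ex : mprod bs * x = mprod (rcons bs x) by rewrite big_rcons.
rewrite ex !IH ?all_rcons ?hx //; first last.
- by move: hs; rewrite !size_cat /=; lia.
- by move: hs; rewrite !size_cat size_rcons /=; lia.
ring.
Qed.

End BelowN.

Section Recursion.
Hypotheses (F_nil : F [::] = 1) (msum_eq0 : forall w, w != [::] -> msum 1 [::] w = 0).

Lemma F_mulBC u v : all inB u -> all inC v -> F (u ++ v) = F u * F v.
Proof.
suff FmulN : forall N u v, all inB u -> all inC v -> (size (u ++ v) < N)%N ->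
    F (u ++ v) = F u * F v by move=> hu hv; apply: (FmulN (size (u ++ v)).+1).
move=> {u v}; elim=> [//|N IH] u v hu hv hs.
have [hlt|hge] := ltnP (size (u ++ v)) N; first exact: IH.
case: u hu hs hge => [|y u] hu hs hge; first by rewrite F_nil mul1r.
case: v hv hs hge => [|z v] hv hs hge; first by rewrite cats0 F_nil mulr1.
have hN : (size ([::] ++ (y :: u) ++ z :: v) <= N)%N by rewrite cat0s -ltnS.
have := @msum_split N IH _ hv (y :: u) [::] [::] isT isT hu hN.
rewrite big_nil !cat0s !msum_eq0 // phi1 mul1r mul0r add0r => /eqP.
by rewrite eq_sym subr_eq0 => /eqP.
Qed.

Lemma lsum_cat_eq0 be g : all inB be -> all inC g -> be != [::] -> g != [::] ->
  lsum 1 [::] (be ++ g) = 0.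
Proof.
move=> hbe hg nbe ng.
have F_mul N u v (hu : all inB u) (hv : all inC v) (_ : (size (u ++ v) < N)%N) :=
  F_mulBC hu hv.
have := @lsum_split (size (be ++ g)) (F_mul _) _ hg ng be [::] [::] isT isT hbe (leqnn _).
by rewrite big_nil /= => ->; rewrite msum_eq0 // mul0r.
Qed.

End Recursion.

End Factorisation.

(** * Addresses in plane trees *)

Definition shift_addr (a : seq nat) : seq nat := if a is h :: a' then h.+1 :: a' else a.

Fixpoint leaf_addrs_from (i : nat) (cs : seq ptree) : seq (seq nat) :=
  match cs with
  | [::] => [::]
  | c :: cs' => [seq i :: a | a <- leaf_addrs c] ++ leaf_addrs_from i.+1 cs'
  end.

Fixpoint internal_addrs_from (i : nat) (cs : seq ptree) : seq (seq nat) :=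
  match cs with
  | [::] => [::]
  | c :: cs' => [seq i :: a | a <- internal_addrs c] ++ internal_addrs_from i.+1 cs'
  end.

Lemma leaf_addrs_node cs : leaf_addrs (PNode cs) = leaf_addrs_from 0 cs.
Proof. by []. Qed.

Lemma internal_addrs_node cs : internal_addrs (PNode cs) = [::] :: internal_addrs_from 0 cs.
Proof. by []. Qed.

Lemma leaf_addrs_fromS i cs : leaf_addrs_from i.+1 cs = map shift_addr (leaf_addrs_from i cs).
Proof. by elim: cs i => [|c cs IH] i //=; rewrite map_cat IH -map_comp. Qed.

Lemma internal_addrs_fromS i cs :
  internal_addrs_from i.+1 cs = map shift_addr (internal_addrs_from i cs).
Proof. by elim: cs i => [|c cs IH] i //=; rewrite map_cat IH -map_comp. Qed.

Lemma leaf_addrs_cons c cs : leaf_addrs (PNode (c :: cs)) =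
  [seq 0%N :: a | a <- leaf_addrs c] ++ map shift_addr (leaf_addrs (PNode cs)).
Proof. by rewrite !leaf_addrs_node /= leaf_addrs_fromS. Qed.

Lemma internal_addrs_cons c cs : behead (internal_addrs (PNode (c :: cs))) =
  [seq 0%N :: a | a <- internal_addrs c] ++ map shift_addr (behead (internal_addrs (PNode cs))).
Proof. by rewrite !internal_addrs_node /= internal_addrs_fromS. Qed.

Lemma nleaves_node cs : nleaves (PNode cs) = sumn [seq nleaves c | c <- cs].
Proof.
rewrite /nleaves leaf_addrs_node; elim: cs 0%N => [|c cs IH] i //=.
by rewrite size_cat size_map IH.
Qed.

Lemma ninternal_node cs : ninternal (PNode cs) = (sumn [seq ninternal c | c <- cs]).+1.
Proof.
rewrite /ninternal internal_addrs_node /=; congr S; elim: cs 0%N => [|c cs IH] i //=.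
by rewrite size_cat size_map IH.
Qed.

Lemma reduced_node cs : reduced (PNode cs) = (2 <= size cs)%N && all reduced cs.
Proof. by rewrite /=; congr andb; elim: cs => //= c cs ->. Qed.

Lemma leaf_addrs_from_nonnil i cs : all (fun a => a != [::]) (leaf_addrs_from i cs).
Proof.
elim: cs i => [|c cs IH] i //=; rewrite all_cat IH andbT.
by apply/allP => a /mapP [b _ ->].
Qed.

Lemma internal_addrs_from_nonnil i cs : all (fun a => a != [::]) (internal_addrs_from i cs).
Proof.
elim: cs i => [|c cs IH] i //=; rewrite all_cat IH andbT.
by apply/allP => a /mapP [b _ ->].
Qed.

Fixpoint all_prop (P : ptree -> Prop) (cs : seq ptree) : Prop :=
  if cs is c :: cs' then P c /\ all_prop P cs' else True.

Fixpoint ptree_ind_all (P : ptree -> Prop) (HL : P PLeaf)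
  (HN : forall cs, all_prop P cs -> P (PNode cs)) (t : ptree) : P t :=
  match t with
  | PLeaf => HL
  | PNode cs => HN cs ((fix go (cs : seq ptree) : all_prop P cs :=
       match cs with
       | [::] => I
       | c :: cs' => conj (ptree_ind_all HL HN c) (go cs')
       end) cs)
  end.

Lemma nleaves_gt0 t : reduced t -> (0 < nleaves t)%N.
Proof.
elim/ptree_ind_all: t => [//|cs IH].
rewrite reduced_node nleaves_node => /andP [].
case: cs IH => [|c cs] //= [IHc _] _ /andP [rc _].
by rewrite addn_gt0 IHc.
Qed.

Lemma nth_map_shift s k : nth [::] (map shift_addr s) k = shift_addr (nth [::] s k).
Proof. by elim: s k => [|a s IH] [|k] //=. Qed.

Lemma leaf_at_consl c cs i : (0 < i <= nleaves c)%N ->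
  leaf_at (PNode (c :: cs)) i = 0%N :: leaf_at c i.
Proof.
move=> /andP [h1 h2]; rewrite /leaf_at leaf_addrs_cons nth_cat size_map.
have hi : (i.-1 < size (leaf_addrs c))%N by rewrite -/(nleaves c); lia.
by rewrite hi (nth_map [::]).
Qed.

Lemma leaf_at_consr c cs i : (nleaves c < i)%N ->
  leaf_at (PNode (c :: cs)) i = shift_addr (leaf_at (PNode cs) (i - nleaves c)).
Proof.
move=> h; rewrite /leaf_at leaf_addrs_cons nth_cat size_map -/(nleaves c).
have -> : (i.-1 < nleaves c)%N = false by lia.
by rewrite nth_map_shift; congr (shift_addr (nth _ _ _)); lia.
Qed.

Lemma leaf_at_node_nonnil cs j : (0 < j <= nleaves (PNode cs))%N ->
  leaf_at (PNode cs) j != [::].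
Proof.
move=> /andP [h1 h2]; rewrite /leaf_at.
have := leaf_addrs_from_nonnil 0 cs; rewrite -leaf_addrs_node => /allP; apply.
by apply: mem_nth; rewrite -/(nleaves _); lia.
Qed.

Lemma lcp_shift x y : x != [::] -> y != [::] ->
  lcp (shift_addr x) (shift_addr y) = shift_addr (lcp x y).
Proof. by case: x => [|h x] //; case: y => [|k y] //= _ _; rewrite eqSS; case: ifP. Qed.

Lemma shift_addr_inj : injective shift_addr.
Proof. by move=> [|h x] [|k y] //= [-> ->]. Qed.

Lemma shift_addr_eq_nil x : (shift_addr x == [::]) = (x == [::]).
Proof. by case: x. Qed.

Lemma clear_view_consl c cs v i : (0 < i < nleaves c)%N ->
  clear_view (PNode (c :: cs)) v i = (v == 0%N :: lcp (leaf_at c i) (leaf_at c i.+1)).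
Proof. by move=> /andP [h1 h2]; rewrite /clear_view !leaf_at_consl /= ?eqxx //; lia. Qed.

Lemma clear_view_cons_root c cs v : (0 < nleaves c)%N -> (0 < nleaves (PNode cs))%N ->
  clear_view (PNode (c :: cs)) v (nleaves c) = (v == [::]).
Proof.
move=> h1 h2; rewrite /clear_view (leaf_at_consl cs (i := nleaves c)); last by rewrite h1 leqnn.
rewrite (leaf_at_consr cs (i := (nleaves c).+1)) // subSnn.
have := @leaf_at_node_nonnil cs 1 ltac:(by rewrite h2).
by case: (leaf_at (PNode cs) 1).
Qed.

Lemma clear_view_consr c cs v i : (nleaves c < i)%N ->
  (i < nleaves c + nleaves (PNode cs))%N ->
  clear_view (PNode (c :: cs)) v i =
  (v == shift_addr (lcp (leaf_at (PNode cs) (i - nleaves c))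
                        (leaf_at (PNode cs) (i - nleaves c).+1))).
Proof.
move=> h1 h2; rewrite /clear_view !leaf_at_consr; try lia.
have -> : (i.+1 - nleaves c = (i - nleaves c).+1)%N by lia.
by rewrite lcp_shift //; apply: leaf_at_node_nonnil; lia.
Qed.

(** * Vertex weights *)

Definition view_prod (A : nzRingType) (t : ptree) (v : seq nat) (a : seq A) : A :=
  \prod_(i <- iota 1 (size a) | clear_view t v i) a`_i.-1.

Section IotaProducts.
Variable A : nzRingType.

Lemma prod_iota_split (P : pred nat) (f : nat -> A) nc m : (0 < nc)%N ->
  \prod_(i <- iota 1 (nc.-1 + m.+1) | P i) f i =
  \prod_(i <- iota 1 nc.-1 | P i) f i *
  ((if P nc then f nc else 1) * \prod_(i <- iota 1 m | P (nc + i)%N) f (nc + i)%N).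
Proof.
move=> hn; rewrite iotaD big_cat.
have -> : (1 + nc.-1 = nc)%N by lia.
rewrite /= big_cons.
have -> : iota nc.+1 m = map (addn nc) (iota 1 m) by rewrite -iotaDl addn1.
by rewrite big_map; case: (P nc); rewrite ?mul1r.
Qed.

Lemma eq_prod_iota (P Q : pred nat) (f g : nat -> A) lo n :
  (forall i, (lo <= i < lo + n)%N -> P i = Q i) ->
  (forall i, (lo <= i < lo + n)%N -> Q i -> f i = g i) ->
  \prod_(i <- iota lo n | P i) f i = \prod_(i <- iota lo n | Q i) g i.
Proof.
move=> hPQ hfg; rewrite big_seq_cond [RHS]big_seq_cond; apply: eq_big => i.
  by rewrite mem_iota; case: (boolP (lo <= i < lo + n)%N) => //= h; rewrite hPQ.
by rewrite mem_iota => /andP [h hp]; apply: hfg => //; rewrite -hPQ.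
Qed.

Lemma prod_iota_pred0 (P : pred nat) (f : nat -> A) lo n :
  (forall i, (lo <= i < lo + n)%N -> P i = false) ->
  \prod_(i <- iota lo n | P i) f i = 1.
Proof. by move=> h; rewrite (@eq_prod_iota P pred0 f f) ?big_pred0_eq. Qed.

End IotaProducts.

Section ViewProdCons.
Variables (A : nzRingType) (c : ptree) (cs : seq ptree) (a : seq A).
Hypotheses (c_gt0 : (0 < nleaves c)%N) (cs_gt0 : (0 < nleaves (PNode cs))%N).
Hypothesis size_a : size a = (nleaves c + nleaves (PNode cs)).-1.

Local Notation nc := (nleaves c).
Local Notation m := (nleaves (PNode cs)).-1.

Let size_a_split : size a = (nc.-1 + m.+1)%N.
Proof. by rewrite size_a; lia. Qed.

Let size_take_a : size (take nc.-1 a) = nc.-1.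
Proof. by rewrite size_take size_a_split; case: ifP => //; lia. Qed.

Let size_drop_a : size (drop nc a) = m.
Proof. by rewrite size_drop size_a_split; lia. Qed.

Let nth_take_a i : (1 <= i <= nc.-1)%N -> a`_i.-1 = (take nc.-1 a)`_i.-1.
Proof. by move=> hi; rewrite nth_take //; lia. Qed.

Let nth_drop_a i : (1 <= i)%N -> a`_(nc + i).-1 = (drop nc a)`_i.-1.
Proof. by move=> hi; rewrite nth_drop; congr nth; lia. Qed.

Lemma view_prod_cons_root :
  view_prod (PNode (c :: cs)) [::] a = a`_nc.-1 * view_prod (PNode cs) [::] (drop nc a).
Proof.
rewrite /view_prod size_a_split prod_iota_split //.
rewrite prod_iota_pred0; last by move=> i hi; rewrite clear_view_consl //; lia.
rewrite clear_view_cons_root // eqxx mul1r size_drop_a; congr (_ * _).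
apply: eq_prod_iota => i hi; last by move=> _; rewrite nth_drop_a //; lia.
rewrite clear_view_consr; try lia.
by rewrite addKn /clear_view !(eq_sym [::]) shift_addr_eq_nil.
Qed.

Lemma view_prod_cons_first v :
  view_prod (PNode (c :: cs)) (0%N :: v) a = view_prod c v (take nc.-1 a).
Proof.
rewrite /view_prod size_a_split prod_iota_split // clear_view_cons_root //.
rewrite [X in _ * (_ * X)]prod_iota_pred0; last first.
  by move=> i hi; rewrite clear_view_consr; try lia; case: (lcp _ _).
rewrite /= !mulr1 size_take_a.
apply: eq_prod_iota => i hi; last by move=> _; rewrite nth_take_a //; lia.
by rewrite clear_view_consl ?eqseq_cons ?eqxx //; lia.
Qed.

Lemma view_prod_cons_shift v : v != [::] ->
  view_prod (PNode (c :: cs)) (shift_addr v) a = view_prod (PNode cs) v (drop nc a).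
Proof.
move=> hv; rewrite /view_prod size_a_split prod_iota_split // clear_view_cons_root //.
rewrite shift_addr_eq_nil (negbTE hv) prod_iota_pred0; last first.
  by move=> i hi; rewrite clear_view_consl; try lia; case: v hv.
rewrite !mul1r size_drop_a.
apply: eq_prod_iota => i hi; last by move=> _; rewrite nth_drop_a //; lia.
by rewrite clear_view_consr; try lia; rewrite addKn (inj_eq shift_addr_inj).
Qed.

End ViewProdCons.

Section TreeWeight.
Variables (K : comNzRingType) (A : nzRingType) (phi : A -> K).

(* A forest is given by the leaf counts and weight functions of its trees;
   [forest_weight fs p w] splits w into the words read by the trees and the
   letters of the sectors between them, the latter being multiplied into p.
   In [forest_weight_sep] the next letter of w is such a separating letter. *)
Fixpoint forest_weight_sep (fs : seq (nat * (seq A -> K))) (p : A) (w : seq A) : K :=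
  match fs with
  | [::] => phi p
  | (k, f) :: fs' => f (take k.-1 (behead w)) * forest_weight_sep fs' (p * head 0 w) (drop k w)
  end.

Definition forest_weight (fs : seq (nat * (seq A -> K))) (p : A) (w : seq A) : K :=
  match fs with
  | [::] => phi p
  | (k, f) :: fs' => f (take k.-1 w) * forest_weight_sep fs' p (drop k.-1 w)
  end.

Fixpoint tree_weight (t : ptree) : seq A -> K :=
  match t with
  | PLeaf => fun _ => 1
  | PNode cs => forest_weight [seq (nleaves c, tree_weight c) | c <- cs] 1
  end.

Definition forestW (cs : seq ptree) : A -> seq A -> K :=
  forest_weight [seq (nleaves c, tree_weight c) | c <- cs].

Definition vertex_weights (t : ptree) (a : seq A) : K :=
  \prod_(v <- internal_addrs t) phi (view_prod t v a).

Lemma forestW_cons c cs p a :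
  (0 < nleaves c)%N -> (0 < size cs)%N -> all (fun c => 0 < nleaves c)%N cs ->
  (nleaves c <= size a)%N ->
  forestW (c :: cs) p a =
  tree_weight c (take (nleaves c).-1 a) * forestW cs (p * a`_(nleaves c).-1) (drop (nleaves c) a).
Proof.
move=> c_gt0 cs_gt0 cs_pos c_le; rewrite /forestW /= (drop_nth 0); last by rewrite prednK.
case: cs cs_gt0 cs_pos => // c' cs _ /andP [hc' _] /=; rewrite prednK //.
by case: (nleaves c') hc'.
Qed.

Lemma node_vertex_weightsE cs : (0 < size cs)%N -> all reduced cs ->
  all_prop (fun c => forall a,
    size a = (nleaves c).-1 -> vertex_weights c a = tree_weight c a) cs ->
  forall p a, size a = (nleaves (PNode cs)).-1 ->
  phi (p * view_prod (PNode cs) [::] a) *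
    \prod_(v <- behead (internal_addrs (PNode cs))) phi (view_prod (PNode cs) v a)
  = forestW cs p a.
Proof.
elim: cs => [//|c cs IH] _ /andP [rc rcs] [Hc Hcs] p a.
have nc0 := nleaves_gt0 rc.
case: cs IH rcs Hcs => [|c2 cs] IH rcs Hcs.
  rewrite nleaves_node /= addn0 => ha.
  rewrite /view_prod prod_iota_pred0; last first.
    by move=> i; rewrite ha => hi; rewrite clear_view_consl //; lia.
  rewrite cats0 big_map /forestW /= take_oversize ?ha // -Hc // mulr1 mulrC.
  congr (_ * _); apply: eq_bigr => v _; congr (phi _); rewrite /view_prod -ha.
  by apply: eq_prod_iota => i hi //; rewrite clear_view_consl ?eqseq_cons ?eqxx //; lia.
move: IH => /(_ isT rcs Hcs) IH; set cs' := c2 :: cs.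
have nt0 : (0 < nleaves (PNode cs'))%N.
  by rewrite nleaves_node /= addn_gt0 nleaves_gt0 //; case/andP: rcs.
have -> : nleaves (PNode (c :: cs')) = (nleaves c + nleaves (PNode cs'))%N by rewrite !nleaves_node.
move=> ha; rewrite internal_addrs_cons big_cat !big_map view_prod_cons_root //.
rewrite (eq_bigr _ (fun v _ => congr1 phi (view_prod_cons_first nc0 nt0 ha v))).
rewrite (eq_big_seq _ (fun v hv => congr1 phi (view_prod_cons_shift nc0 nt0 ha _))); last first.
  by have /allP := internal_addrs_from_nonnil 0 cs'; apply.
rewrite -[\prod_(v <- internal_addrs c) _]/(vertex_weights c _) Hc; last first.
  by rewrite size_take ha; case: ifP => //; lia.
rewrite forestW_cons ?ha //; last 2 first.
- exact: (@sub_all _ reduced _ (fun c0 => @nleaves_gt0 c0) cs' rcs).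
- by lia.
rewrite -IH; last by rewrite size_drop ha /cs'; lia.
rewrite [p * (_ * _)]mulrA; exact: mulrCA.
Qed.

Lemma vertex_weightsE t a : reduced t -> size a = (nleaves t).-1 ->
  vertex_weights t a = tree_weight t a.
Proof.
elim/ptree_ind_all: t a => [a _ _|cs IH a]; first by rewrite /vertex_weights big_nil.
rewrite reduced_node => /andP [h2 rcs] ha.
rewrite /vertex_weights internal_addrs_node big_cons -[X in phi X]mul1r.
apply: node_vertex_weightsE => //; first by lia.
elim: cs IH rcs {h2 ha} => [//|c cs IHcs] /= [Hc Hcs] /andP [rc rcs].
by split; [move=> a' ha'; exact: Hc | exact: IHcs].
Qed.

End TreeWeight.

(** * Enumeration of reduced plane trees *)

Lemma size_rpt_table m : size (rpt_table m) = m.+1.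
Proof. by elim: m => //= m IH; rewrite size_rcons IH. Qed.

Lemma nth_rpt_table m k : (k <= m)%N -> nth [::] (rpt_table m) k = rpt k.
Proof.
elim: m => [|m IH] hk; first by case: k hk.
rewrite leq_eqVlt in hk; case/orP: hk => [/eqP ->//|hk].
by rewrite /= nth_rcons (size_rpt_table m) hk IH.
Qed.

Lemma nth_rpt_table_over m : nth [::] (rpt_table m) m.+1 = [::].
Proof. by rewrite nth_default // size_rpt_table. Qed.

Lemma rpt1 : rpt 1 = [:: PLeaf].
Proof. by []. Qed.

Lemma rptSS m : rpt m.+2 =
  [seq PNode cs | cs <- forests (rpt_table m.+1) m.+2 m.+2 & (2 <= size cs)%N].
Proof. by rewrite /rpt [rpt_table m.+2]/= nth_rcons (size_rpt_table m.+1) ltnn eqxx. Qed.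

Lemma forests0 T f : forests T f 0 = [:: [::]].
Proof. by case: f. Qed.

Lemma all_flatten (T : Type) (P : pred T) (ss : seq (seq T)) :
  all P (flatten ss) = all (all P) ss.
Proof. by elim: ss => //= s ss IH; rewrite all_cat IH. Qed.

Lemma all_allpairs_dep (S T R : Type) (P : pred R) (PS : pred S) (f : S -> T -> R)
  (s : seq S) (t : S -> seq T) :
  all PS s -> (forall x, PS x -> all (fun y => P (f x y)) (t x)) ->
  all P [seq f x y | x <- s, y <- t x].
Proof.
elim: s => //= x s IH /andP [hx hs] h; rewrite all_cat IH // andbT all_map.
exact: h.
Qed.

Lemma eq_big_all (R : nmodType) (I : Type) (P : pred I) r (F1 F2 : I -> R) :
  all P r -> (forall x, P x -> F1 x = F2 x) -> \sum_(x <- r) F1 x = \sum_(x <- r) F2 x.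
Proof.
elim: r => [|x r IH] /=; first by rewrite !big_nil.
by case/andP=> hx hr h; rewrite !big_cons h // IH.
Qed.

Definition reduced_with_leaves (k : nat) (t : ptree) : bool := reduced t && (nleaves t == k).

Definition reduced_forest_with_leaves (s : nat) (cs : seq ptree) : bool :=
  all reduced cs && (sumn [seq nleaves c | c <- cs] == s).

Lemma forests_reduced T f s :
  (forall k, (0 < k <= s)%N -> all (reduced_with_leaves k) (nth [::] T k)) ->
  all (reduced_forest_with_leaves s) (forests T f s).
Proof.
elim: f s => [|f IH] s hT; first by case: s hT.
rewrite /=; case: eqP => [->//|/eqP s0].
rewrite all_flatten all_map; apply/allP => k; rewrite mem_iota => /andP [k1 k2] /=.
apply: (all_allpairs_dep (PS := reduced_with_leaves k)); first by apply: hT; rewrite k1; lia.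
move=> t /andP [rt /eqP nt].
have : all (reduced_forest_with_leaves (s - k)) (forests T f (s - k)).
  by apply: IH => k' hk'; apply: hT; lia.
apply: sub_all => r /andP [rr /eqP sr] /=.
by rewrite /reduced_forest_with_leaves /= rt rr sr nt /=; apply/eqP; lia.
Qed.

Lemma rpt_reduced k : (0 < k)%N -> all (reduced_with_leaves k) (rpt k).
Proof.
elim/ltn_ind: k => k IH k0.
case: k IH k0 => [//|[|m]] IH _; first by [].
rewrite rptSS all_map all_filter.
have hf : all (reduced_forest_with_leaves m.+2) (forests (rpt_table m.+1) m.+2 m.+2).
  apply: forests_reduced => k' /andP [k1 k2]; rewrite leq_eqVlt in k2.
  case/orP: k2 => [/eqP ->|k2]; first by rewrite nth_rpt_table_over.
  by rewrite nth_rpt_table ?IH //; lia.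
apply: sub_all hf => cs /andP [rcs /eqP ns]; apply/implyP => h2 /=.
change (reduced (PNode cs) && (nleaves (PNode cs) == m.+2)).
by rewrite reduced_node h2 rcs nleaves_node ns eqxx.
Qed.

Definition is_leaf (t : ptree) : bool := if t is PLeaf then true else false.

Lemma rptSS_node m : all (predC is_leaf) (rpt m.+2).
Proof. by rewrite rptSS; elim: (filter _ _). Qed.

Lemma forests_nonempty_pos T f s : (0 < s)%N ->
  (forall k, (0 < k <= s)%N -> nth [::] T k = rpt k) ->
  all (fun r => (0 < size r)%N && all (fun c => 0 < nleaves c)%N r) (forests T f s).
Proof.
move=> s0 hT.
have : all (reduced_forest_with_leaves s) (forests T f s).
  by apply: forests_reduced => k hk; rewrite hT //; apply: rpt_reduced; lia.
apply: sub_all => r /andP [rr /eqP sr].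
apply/andP; split; first by case: r rr sr => //= _; lia.
by apply: sub_all rr => c /nleaves_gt0.
Qed.

Lemma forests_size_gt1 T f s : (0 < s)%N -> nth [::] T s = [::] ->
  (forall k, (0 < k < s)%N -> all (reduced_with_leaves k) (nth [::] T k)) ->
  all (fun cs => 1 < size cs)%N (forests T f s).
Proof.
case: f => [|f] s0 hs hT; first by case: s s0 {hs hT}.
rewrite /=; case: eqP => [s00|_]; first by move: s0; rewrite s00.
rewrite all_flatten all_map; apply/allP => k; rewrite mem_iota => /andP [k1 k2] /=.
have [->|ks] := eqVneq k s; first by rewrite hs.
have kl : (k < s)%N by rewrite ltn_neqAle ks.
apply: (all_allpairs_dep (PS := predT)); first by rewrite all_predT.
move=> t _.
have : all (reduced_forest_with_leaves (s - k)) (forests T f (s - k)).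
  by apply: forests_reduced => k' hk'; apply: hT; lia.
by apply: sub_all => -[|? ?] /andP [_ /eqP] //= h; lia.
Qed.

Lemma forests_top_reduced m :
  all (fun cs => (1 < size cs)%N && reduced_forest_with_leaves m.+2 cs)
    (forests (rpt_table m.+1) m.+2 m.+2).
Proof.
have hT k : (0 < k <= m.+1)%N ->
    all (reduced_with_leaves k) (nth [::] (rpt_table m.+1) k).
  by move=> /andP [k1 k2]; rewrite nth_rpt_table // rpt_reduced.
have h1 := @forests_size_gt1 (rpt_table m.+1) m.+2 m.+2 isT (nth_rpt_table_over _)
   ltac:(by move=> k /andP [k1 k2]; apply: hT; lia).
have h2 := @forests_reduced (rpt_table m.+1) m.+2 m.+2
   ltac:(move=> k /andP [k1 k2]; rewrite leq_eqVlt in k2; case/orP: k2 => [/eqP ->|k2];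
     [by rewrite nth_rpt_table_over | by apply: hT; lia]).
by elim: (forests _ _ _) h1 h2 => //= cs l IH /andP [-> a2] /andP [-> b2]; rewrite IH.
Qed.

Lemma sum_forests_unfold (K : nmodType) T f s (G : seq ptree -> K) : (0 < s)%N ->
  \sum_(cs <- forests T f.+1 s) G cs =
  \sum_(j <- iota 0 s.-1) \sum_(t <- nth [::] T j.+1)
      \sum_(r <- forests T f (s - j.+1)) G (t :: r)
  + \sum_(t <- nth [::] T s) G [:: t].
Proof.
case: s => // s _.
have -> : forests T f.+1 s.+1 = flatten [seq [seq t :: r | t <- nth [::] T k,
     r <- forests T f (s.+1 - k)] | k <- iota 1 s.+1] by [].
have -> : iota 1 s.+1 = iota 1 s ++ [:: s.+1] by rewrite -(iotaD 1 s 1) addn1.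
rewrite big_flatten big_map big_cat big_seq1 iota1S big_map /=.
congr (_ + _); first by apply: eq_bigr => j _; rewrite big_allpairs_dep.
by rewrite big_allpairs_dep subnn forests0; apply: eq_bigr => t _; rewrite big_seq1.
Qed.

(** * The tree series F *)

Section TreeSeries.
Variables (K : comNzRingType) (A : nzRingType) (phi : A -> K).

Local Notation tree_weight := (tree_weight phi).
Local Notation forestW := (forestW phi).

Definition tree_sign (t : ptree) : K := (-1) ^+ ninternal t.
Definition forest_sign (cs : seq ptree) : K := \prod_(c <- cs) tree_sign c.

Definition treeF (w : seq A) : K :=
  \sum_(t <- rpt (size w).+1) tree_sign t * tree_weight t w.

Local Notation msum := (msum phi treeF).
Local Notation lsum := (lsum phi treeF).

Lemma treeF_nil : treeF [::] = 1.
Proof. by rewrite /treeF /= rpt1 big_seq1 /tree_sign /ninternal /= expr0 mul1r. Qed.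

Lemma tree_sign_node cs : tree_sign (PNode cs) = - forest_sign cs.
Proof.
rewrite /tree_sign ninternal_node exprS mulN1r; congr (- _).
by rewrite /forest_sign; elim: cs => [|c cs IH] /=; rewrite ?big_nil // big_cons exprD IH.
Qed.

Lemma kappa_sign_node cs : (-1) ^+ (ninternal (PNode cs)).-1 = forest_sign cs.
Proof. by rewrite -[forest_sign cs]opprK -tree_sign_node /tree_sign exprS mulN1r opprK. Qed.

Lemma sum_rpt_leaf s w : (0 < s)%N -> size w = s.-1 ->
  \sum_(t <- rpt s) (if is_leaf t then tree_sign t * tree_weight t w else 0) =
  if w is [::] then 1 else 0.
Proof.
case: s => [//|[|m]] _ hw.
  by rewrite rpt1 big_seq1 /= /tree_sign /ninternal /= expr0 mul1r; case: w hw.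
rewrite (eq_big_all (rptSS_node m) (F2 := fun _ => 0)); first by rewrite big1 //; case: w hw.
by case.
Qed.

Lemma forest_term_cons t r p w j : nleaves t = j.+1 -> (j < size w)%N ->
  (0 < size r)%N -> all (fun c => 0 < nleaves c)%N r ->
  forest_sign (t :: r) * forestW (t :: r) p w =
  tree_sign t * tree_weight t (take j w) * (forest_sign r * forestW r (p * w`_j) (drop j.+1 w)).
Proof.
move=> ht hj r0 rpos; rewrite /forest_sign big_cons -/(forest_sign r).
by rewrite forestW_cons ?ht //=; ring.
Qed.

Lemma msum_treeF s q w : (0 < s)%N -> size w = s.-1 ->
  (\sum_(t <- rpt s) tree_sign t * tree_weight t w) * phi q +
  \sum_(j <- iota 0 s.-1) treeF (take j w) * msum (q * w`_j) [::] (drop j.+1 w)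
  = msum q [::] w.
Proof. by move=> h0 h; rewrite msum_unroll /= h; congr (_ + _); rewrite mulrC /treeF h prednK. Qed.

Lemma lsum_treeF s q w : (0 < s)%N -> size w = s.-1 ->
  (\sum_(t <- rpt s) (if is_leaf t then tree_sign t * tree_weight t w else 0)) * phi q +
  \sum_(j <- iota 0 s.-1) treeF (take j w) * lsum (q * w`_j) [::] (drop j.+1 w)
  = lsum q [::] w.
Proof.
move=> h0 h; rewrite lsum_unroll /= sum_rpt_leaf // h.
by congr (_ + _); case: (w); rewrite ?mul1r ?mul0r.
Qed.

Lemma sum_forests_first T f s j w (G H : seq ptree -> K) :
  (j < s.-1)%N -> size w = s.-1 ->
  (forall k, (0 < k < s)%N -> nth [::] T k = rpt k) ->
  (forall t r, nleaves t = j.+1 -> (0 < size r)%N -> all (fun c => 0 < nleaves c)%N r ->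
     G (t :: r) = tree_sign t * tree_weight t (take j w) * H r) ->
  \sum_(t <- nth [::] T j.+1) \sum_(r <- forests T f (s - j.+1)) G (t :: r) =
  treeF (take j w) * \sum_(r <- forests T f (s - j.+1)) H r.
Proof.
move=> hj hw hT hG.
have size_take_w : size (take j w) = j by rewrite size_take hw; case: ifP => //; lia.
rewrite hT; last by lia.
rewrite /treeF size_take_w big_distrl /=.
apply: (eq_big_all (rpt_reduced (k := j.+1) isT)) => t /andP [_ /eqP ht].
have rest_pos := @forests_nonempty_pos T f (s - j.+1) ltac:(lia) ltac:(move=> k hk; apply: hT; lia).
by rewrite big_distrr /=; apply: (eq_big_all rest_pos) => r /andP [r0 rpos]; apply: hG.
Qed.

(* T need only agree with [rpt] below s: the top-level enumeration of rpt s
   uses the table [rpt_table s.-1], whose entry s is empty. *)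
Lemma sum_forests_expand s : forall T f p w, (0 < s <= f)%N -> size w = s.-1 ->
  (forall k, (0 < k < s)%N -> nth [::] T k = rpt k) ->
  all (fun t => nleaves t == s) (nth [::] T s) ->
  (\sum_(cs <- forests T f s) forest_sign cs * forestW cs p w =
   (\sum_(t <- nth [::] T s) tree_sign t * tree_weight t w) * phi p +
   \sum_(j <- iota 0 s.-1) treeF (take j w) * msum (p * w`_j) [::] (drop j.+1 w)) /\
  (\sum_(cs <- forests T f s)
      (if is_leaf (last PLeaf cs) then forest_sign cs * forestW cs p w else 0) =
   (\sum_(t <- nth [::] T s) (if is_leaf t then tree_sign t * tree_weight t w else 0)) * phi p +
   \sum_(j <- iota 0 s.-1) treeF (take j w) * lsum (p * w`_j) [::] (drop j.+1 w)).
Proof.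
elim/ltn_ind: s => s IH T f p w /andP [s0 sf] hw hT hTs.
case: f sf => [|f] sf; first lia.
have single_trees (G : seq ptree -> K) (H : ptree -> K) :
    (forall t, nleaves t = s -> G [:: t] = H t * phi p) ->
    \sum_(t <- nth [::] T s) G [:: t] = (\sum_(t <- nth [::] T s) H t) * phi p.
  by move=> hG; rewrite big_distrl /=; apply: (eq_big_all hTs) => t /eqP; exact: hG.
have rest j : (j < s.-1)%N -> let s' := (s - j.+1)%N in
  [/\ (s' < s)%N, (0 < s' <= f)%N, size (drop j.+1 w) = s'.-1,
      forall k, (0 < k < s')%N -> nth [::] T k = rpt k &
      all (fun t => nleaves t == s') (nth [::] T s')].
  move=> hj s'; split; rewrite /s'; try lia.
  - by rewrite size_drop hw; lia.
  - by move=> k hk; apply: hT; lia.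
  rewrite hT; last by lia.
  by apply: sub_all (rpt_reduced (k := s - j.+1) _) => [t /andP []|]; lia.
rewrite !sum_forests_unfold //; split; rewrite addrC; congr (_ + _).
- apply: (single_trees (fun cs => forest_sign cs * forestW cs p w)
    (fun t => tree_sign t * tree_weight t w)) => t ht.
  by rewrite /forest_sign /forestW big_seq1 /= take_oversize ?hw ?ht //; ring.
- rewrite big_seq_cond [RHS]big_seq_cond; apply: eq_bigr => j.
  rewrite mem_iota andbT => /andP [_ hj]; have [hlt hs' hw' hT' hTs'] := rest j hj.
  rewrite (@sum_forests_first T f s j w (fun cs => forest_sign cs * forestW cs p w)
    (fun r => forest_sign r * forestW r (p * w`_j) (drop j.+1 w)) hj hw hT); last first.
    by move=> t r ht r0 rpos; apply: forest_term_cons => //; lia.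
  by rewrite (IH _ hlt T f _ _ hs' hw' hT' hTs').1 hT ?msum_treeF //; lia.
- apply: (single_trees
    (fun cs => if is_leaf (last PLeaf cs) then forest_sign cs * forestW cs p w else 0)
    (fun t => if is_leaf t then tree_sign t * tree_weight t w else 0)) => t ht.
  rewrite /forest_sign /forestW big_seq1 /= take_oversize ?hw ?ht //.
  by case: (is_leaf t); rewrite ?mul0r //; ring.
- rewrite big_seq_cond [RHS]big_seq_cond; apply: eq_bigr => j.
  rewrite mem_iota andbT => /andP [_ hj]; have [hlt hs' hw' hT' hTs'] := rest j hj.
  rewrite (@sum_forests_first T f s j w
    (fun cs => if is_leaf (last PLeaf cs) then forest_sign cs * forestW cs p w else 0)
    (fun r => if is_leaf (last PLeaf r)
      then forest_sign r * forestW r (p * w`_j) (drop j.+1 w) else 0) hj hw hT); last first.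
    move=> t r ht r0 rpos; rewrite [last _ _]/=.
    have -> : last t r = last PLeaf r by case: r r0 {rpos}.
    by case: ifP => _; rewrite ?mulr0 // (@forest_term_cons t r p w j ht) //; lia.
  by rewrite (IH _ hlt T f _ _ hs' hw' hT' hTs').2 hT ?lsum_treeF //; lia.
Qed.

Lemma sum_forests_top m p w : size w = m.+1 ->
  (\sum_(cs <- forests (rpt_table m.+1) m.+2 m.+2) forest_sign cs * forestW cs p w =
   \sum_(j <- iota 0 m.+1) treeF (take j w) * msum (p * w`_j) [::] (drop j.+1 w)) /\
  (\sum_(cs <- forests (rpt_table m.+1) m.+2 m.+2)
      (if is_leaf (last PLeaf cs) then forest_sign cs * forestW cs p w else 0) =
   \sum_(j <- iota 0 m.+1) treeF (take j w) * lsum (p * w`_j) [::] (drop j.+1 w)).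
Proof.
move=> hw.
have := @sum_forests_expand m.+2 (rpt_table m.+1) m.+2 p w (leqnn _) hw
  ltac:(by move=> k hk; rewrite nth_rpt_table //; lia) ltac:(by rewrite nth_rpt_table_over).
by rewrite nth_rpt_table_over !big_nil !mul0r !add0r.
Qed.

Lemma msum_treeF_eq0 (phi1 : phi 1 = 1) w : w != [::] -> msum 1 [::] w = 0.
Proof.
move=> wn; have [m hw] : exists m, size w = m.+1 by case: w wn => // x w0; exists (size w0).
suff : treeF w = - (msum 1 [::] w - treeF w).
  by rewrite opprB => /eqP; rewrite eq_sym subr_eq addrC -subr_eq subrr eq_sym => /eqP.
rewrite {1}/treeF hw rptSS big_map big_filter big_mkcond /=.
rewrite (eq_big_all (forests_top_reduced m)
  (F2 := fun cs => - (forest_sign cs * forestW cs 1 w))); last first.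
  by move=> cs /andP [-> _]; rewrite tree_sign_node mulNr.
rewrite sumrN (sum_forests_top 1 hw).1; congr (- _).
by rewrite msum_unroll phi1 mul1r hw /= addrC addKr.
Qed.

End TreeSeries.

Lemma kappa_lsum (K : comNzRingType) (A : algType K) (phi : A -> K) w :
  w != [::] -> kappa phi w = lsum phi (treeF phi) 1 [::] w.
Proof.
move=> wn; have [m hw] : exists m, size w = m.+1 by case: w wn => // x w0; exists (size w0).
rewrite /kappa /PST big_filter big_mkcond.
rewrite (eq_big_all (rpt_reduced (k := (size w).+1) isT) (F2 := fun t =>
  if prime_tree t then (-1) ^+ (ninternal t).-1 * tree_weight phi t w else 0)); last first.
  move=> t /andP [rt /eqP nt]; rewrite rt /weight nt eqxx /=.
  by case: ifP => // _; rewrite -vertex_weightsE // nt.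
rewrite hw rptSS big_map big_filter big_mkcond /=.
rewrite (eq_big_all (forests_top_reduced m) (F2 := fun cs =>
  if is_leaf (last PLeaf cs) then forest_sign K cs * forestW phi cs 1 w else 0)); last first.
  move=> cs /andP [h2 /andP [_ /eqP ns]].
  by rewrite h2 /prime_tree nleaves_node ns kappa_sign_node.
rewrite (sum_forests_top phi 1 hw).2 lsum_unroll hw /=.
by case: w wn {hw} => // ? ? _; rewrite add0r.
Qed.

Theorem mainTheorem6 (R : realType) (A : algType R[i])
    (phi : {linear A -> R[i]^o}) (phi1 : phi 1 = 1)
    (B C : pred A) (hBC : cluster phi B C)
    (bs cs : seq A) :
  (0 < size bs)%N -> (0 < size cs)%N ->
  all [in B] bs -> all [in C] cs ->
  kappa phi (bs ++ cs) = 0.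
Proof.
move=> hb hc hB hC.
have bs0 : bs != [::] by case: bs hb {hB}.
have cs0 : cs != [::] by case: cs hc {hC}.
rewrite kappa_lsum; last by case: bs bs0 {hb hB}.
exact: (lsum_cat_eq0 hBC phi1 (treeF_nil phi) (fun w => msum_treeF_eq0 phi1 (w := w))).
Qed.
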